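(* Let $g\in\mathcal{G}$ be slow-jumping and slow-dropping. There exists a sub-polynomial function $h$ such that for every $\lambda>0$, every stream $D\in\mathcal{D}(n,m)$ with frequencies $v_1,\dots,v_n$, and every $i\in[n]$: if $g(|v_i|)\ge \lambda\sum_{j=1}^n g(|v_j|)$, then $v_i^2\ge \frac{\lambda}{h(|v_i|)}\sum_{j:|v_j|<|v_i|} v_j^2$.
   Context: Streams: a stream of length $m$ with domain $[n]$ is a list $\langle (i_1,\delta_1),\dots,(i_m,\delta_m)\rangle$ with $i_j\in[n]$, $\delta_j\in\mathbb{Z}$; its frequencies are $v_i=\sum_{j:i_j=i}\delta_j$. $\mathcal{D}(n,m)$ is the set of turnstile streams with domain $[n]$ and length at most $m$ (there is $M$ with all prefix frequency vectors in $\{-M,\dots,M\}^n$). $\mathcal{G}=\{g:\mathbb{Z}_{\ge0}\to\mathbb{R}: g(0)=0,\ g(1)=1,\ g(x)>0\ \forall x>0\}$. A function $f:\mathbb{R}_{\ge0}\to\mathbb{R}_{\ge0}$ is sub-polynomial if for every $\alpha>0$, $\lim_{x\to\infty}x^\alpha f(x)=\infty$ and $\lim_{x\to\infty}x^{-\alpha}f(x)=0$. $g$ is slow-jumping if for every $\alpha>0$ there is $N>0$ such that for all positive integers $x<y$ with $y\ge N$, $g(y)\le \lfloor y/x\rfloor^{2+\alpha}x^\alpha g(x)$. $g$ is slow-dropping if for every $\alpha>0$ there is $N>0$ such that for all $x<y$ with $y\ge N$, $g(y)\ge g(x)/y^\alpha$. *)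

From HB Require Import structures.
From mathcomp Require Import all_boot all_order all_algebra.
From mathcomp Require Import all_classical all_reals all_analysis.
Set Implicit Arguments. Unset Strict Implicit. Unset Printing Implicit Defensive.
Import Order.TTheory GRing.Theory Num.Theory.
Import numFieldNormedType.Exports.
Local Open Scope classical_set_scope.
Local Open Scope ring_scope.

(* A turnstile stream with domain [n] (indexed 0..n-1 via 'I_n): a list of
   updates (i_j, delta_j). *)
Definition stream (n : nat) := seq ('I_n * int).

(* D(n,m): streams with domain [n] and length at most m.  (The bound M on
   prefix frequencies always exists for a finite stream.) *)
Definition in_D (n m : nat) (D : stream n) : Prop := (size D <= m)%N.

Definition freq (n : nat) (D : stream n) (i : 'I_n) : int :=
  \sum_(p <- D | p.1 == i) p.2.

Definition in_G (R : realType) (g : nat -> R) : Prop :=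
  g 0%N = 0 /\ g 1%N = 1 /\ (forall x : nat, (0 < x)%N -> 0 < g x).

Definition slow_jumping (R : realType) (g : nat -> R) : Prop :=
  forall alpha : R, 0 < alpha -> exists N : nat, (0 < N)%N /\
    forall x y : nat, (0 < x)%N -> (x < y)%N -> (N <= y)%N ->
      g y <= ((y %/ x)%:R `^ (2 + alpha)) * (x%:R `^ alpha) * g x.

Definition slow_dropping (R : realType) (g : nat -> R) : Prop :=
  forall alpha : R, 0 < alpha -> exists N : nat, (0 < N)%N /\
    forall x y : nat, (x < y)%N -> (N <= y)%N ->
      g x / (y%:R `^ alpha) <= g y.

(* sub-polynomial f : R>=0 -> R>=0 (represented as R -> R, nonnegative on R>=0) *)
Definition sub_polynomial (R : realType) (f : R -> R) : Prop :=
  (forall x : R, 0 <= x -> 0 <= f x) /\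
  forall alpha : R, 0 < alpha ->
    (x `^ alpha * f x @[x --> +oo] --> +oo) /\
    (x `^ (- alpha) * f x @[x --> +oo] --> 0).

(* Let h(a) be the least H >= 1 with b^2 g(a) <= H a^2 g(b) for all b < a.
   If g(v_i) >= lambda * sum_j g(v_j), summing this bound over the coordinates
   lighter than a = v_i gives g(a) sum v_j^2 <= h(a) a^2 sum_j g(v_j)
   <= h(a) a^2 g(a) / lambda.  As h >= 1, x^alpha h(x) diverges; slow jumping
   with exponent beta gives g(a) <= (a/b)^(2+beta) b^beta g(b) = (a/b)^2 a^beta g(b),
   i.e. h(a) <= a^beta for large a, so x^(-alpha) h(x) vanishes. *)

From HB Require Import structures.
From mathcomp Require Import all_boot all_order all_algebra.
From mathcomp Require Import all_classical all_reals all_analysis.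
From mathcomp Require Import lra ring.
Set Implicit Arguments. Unset Strict Implicit. Unset Printing Implicit Defensive.
Import Order.TTheory GRing.Theory Num.Theory.
Local Open Scope ring_scope.

Section PowRGrowth.
Variable R : realType.

Lemma nbhs_pinfty_ge_powR (b A : R) : 0 < b -> \forall x \near +oo, A <= x `^ b.
Proof.
move=> b_gt0; set M := Num.max A 1.
have M_ge0 : 0 <= M by rewrite le_max ler01 orbT.
near=> x.
have Mx : M `^ b^-1 <= x by near: x; apply: nbhs_pinfty_ge; apply: num_real.
have x_ge0 : 0 <= x by apply: le_trans Mx; apply: powR_ge0.
apply: (@le_trans _ _ M); first by rewrite le_max lexx.
have -> : M = (M `^ b^-1) `^ b by rewrite -powRrM mulVf ?gt_eqF // powRr1.
by apply: ge0_ler_powR; rewrite ?nnegrE ?powR_ge0 // ltW.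
Unshelve. all: by end_near.
Qed.

Lemma sub_polynomial_between_1_powR (h : R -> R) :
  (forall x, 0 <= x -> 1 <= h x) ->
  (forall beta, 0 < beta -> \forall x \near +oo, h x <= x `^ beta) ->
  sub_polynomial h.
Proof.
move=> h_ge1 h_le; split=> [x /h_ge1|alpha alpha_gt0]; first exact: le_trans.
split.
  apply/cvgryPge => A; near=> x.
  have x_ge0 : 0 <= x by near: x; apply: nbhs_pinfty_ge; apply: num_real.
  have xA : A <= x `^ alpha by near: x; exact: nbhs_pinfty_ge_powR.
  apply: le_trans xA _; rewrite ler_peMr ?powR_ge0 //; exact: h_ge1.
apply/cvgr0Pnorm_le => eps eps_gt0.
have beta_gt0 : 0 < alpha / 2 by apply: divr_gt0.
near=> x.
have x_ge1 : 1 <= x by near: x; apply: nbhs_pinfty_ge; apply: num_real.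
have s_ge : eps^-1 <= x `^ (alpha / 2) by near: x; exact: nbhs_pinfty_ge_powR.
have hs : h x <= x `^ (alpha / 2) by near: x; apply: h_le.
set s := x `^ (alpha / 2) in s_ge hs *.
have s_gt0 : 0 < s by apply: powR_gt0; apply: lt_le_trans x_ge1.
(* [x `^ (- alpha) * h x <= s^-2 * s = s^-1 <= eps] *)
have -> : x `^ (- alpha) = (s * s)^-1.
  rewrite powRN /s -powRD -?splitr //.
  by rewrite gt_eqF ?implybT // (lt_le_trans ltr01 x_ge1).
have h_ge0 : 0 <= h x by exact: le_trans ler01 (h_ge1 _ (le_trans ler01 x_ge1)).
have ss_inv_ge0 : 0 <= (s * s)^-1 by rewrite invr_ge0 mulr_ge0 // ltW.
rewrite ger0_norm ?mulr_ge0 //.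
apply: (@le_trans _ _ ((s * s)^-1 * s)); first by rewrite ler_wpM2l.
by rewrite invfM -mulrA mulVf ?gt_eqF // mulr1 -(invrK eps) lef_pV2 ?posrE ?invr_gt0.
Unshelve. all: by end_near.
Qed.

End PowRGrowth.

Section SqGrowthBound.
Variables (R : realType) (g : nat -> R).
Hypothesis g_ge0 : forall x, 0 <= g x.
Hypothesis g_gt0 : forall x, (0 < x)%N -> 0 < g x.

Definition sq_growth_bound (a : nat) : R :=
  \big[Num.max/1]_(b < a) (b%:R ^+ 2 * g a / (a%:R ^+ 2 * g b)).

Lemma sq_growth_bound_ge1 a : 1 <= sq_growth_bound a.
Proof. exact: bigmax_ge_id. Qed.

Lemma sq_growth_bound_gt0 a : 0 < sq_growth_bound a.
Proof. exact: lt_le_trans ltr01 (sq_growth_bound_ge1 a). Qed.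

Lemma sq_growth_boundP a b : (b < a)%N ->
  b%:R ^+ 2 * g a <= sq_growth_bound a * (a%:R ^+ 2 * g b).
Proof.
case: b => [|b] ba.
  rewrite mulr0n expr0n mul0r; apply: mulr_ge0; first exact: ltW (sq_growth_bound_gt0 a).
  exact: mulr_ge0 (sqr_ge0 _) (g_ge0 _).
have den_gt0 : 0 < a%:R ^+ 2 * g b.+1.
  by rewrite mulr_gt0 ?exprn_gt0 ?g_gt0 // ltr0n (leq_ltn_trans _ ba).
rewrite -ler_pdivrMr //; exact: (le_bigmax _ _ (Ordinal ba)).
Qed.

Lemma sq_growth_bound_le a B : 1 <= B ->
  (forall b, (0 < b < a)%N -> b%:R ^+ 2 * g a <= B * (a%:R ^+ 2 * g b)) ->
  sq_growth_bound a <= B.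
Proof.
move=> B_ge1 hB; apply/bigmax_leP; split=> // -[[|b] ba] _ /=.
  by rewrite expr0n !mul0r (le_trans ler01).
have den_gt0 : 0 < a%:R ^+ 2 * g b.+1.
  by rewrite mulr_gt0 ?exprn_gt0 ?g_gt0 // ltr0n (leq_ltn_trans _ ba).
by rewrite ler_pdivrMr // hB.
Qed.

Lemma heavy_sq_mass (T : finType) (v : T -> nat) (i : T) (lambda : R) :
  0 < lambda -> lambda * \sum_j g (v j) <= g (v i) ->
  lambda / sq_growth_bound (v i) * \sum_(j | (v j < v i)%N) (v j)%:R ^+ 2
    <= (v i)%:R ^+ 2.
Proof.
move=> lambda_gt0 heavy; set a := v i in heavy *.
case: (posnP a) => [a0|a_gt0].
  by rewrite big_pred0 ?mulr0 ?sqr_ge0 // => j; rewrite a0 ltn0.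
set H := sq_growth_bound a; set T2 := \sum_(j | _) _; set S := \sum_j _ in heavy.
have H_gt0 : 0 < H := sq_growth_bound_gt0 a.
have light : g a * T2 <= H * (a%:R ^+ 2 * S).
  apply: (@le_trans _ _ (H * (a%:R ^+ 2 * \sum_(j | (v j < a)%N) g (v j)))).
    rewrite /T2 !mulr_sumr; apply: ler_sum => j /sq_growth_boundP.
    by rewrite mulrC.
  apply: ler_wpM2l; first exact: ltW.
  apply: ler_wpM2l; first exact: sqr_ge0.
  by rewrite /S [X in _ <= X](bigID (fun j => (v j < a)%N)) /= lerDl sumr_ge0.
rewrite mulrAC ler_pdivrMr // -(ler_pM2l (g_gt0 a_gt0)).
have := ler_wpM2l (ltW lambda_gt0) light.
have := ler_wpM2l (mulr_ge0 (ltW H_gt0) (sqr_ge0 a%:R)) heavy.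
nra.
Qed.

Lemma slow_jumping_sq_ratio (beta : R) (a b : nat) : 0 < beta -> (0 < b < a)%N ->
  g a <= (a %/ b)%:R `^ (2 + beta) * b%:R `^ beta * g b ->
  b%:R ^+ 2 * g a <= a%:R `^ beta * (a%:R ^+ 2 * g b).
Proof.
move=> beta_gt0 /andP[b_gt0 ba] jump.
have aR_gt0 : 0 < a%:R :> R by rewrite ltr0n (ltn_trans b_gt0).
have bR_gt0 : 0 < b%:R :> R by rewrite ltr0n.
have ab_gt0 : 0 < a%:R / b%:R :> R by apply: divr_gt0.
have quot_le : (a %/ b)%:R <= a%:R / b%:R :> R.
  by rewrite ler_pdivlMr // -natrM ler_nat leq_divM.
have split_pow : (a%:R / b%:R) `^ (2 + beta) * b%:R `^ beta
                 = (a%:R / b%:R) ^+ 2 * a%:R `^ beta :> R.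
  rewrite powRD ?(gt_eqF ab_gt0) ?implybT // -mulrA -powRM ?ltW // divfK ?gt_eqF //.
  by congr (_ * _); exact: powR_mulrn 2 (ltW ab_gt0).
have ga : g a <= (a%:R / b%:R) ^+ 2 * a%:R `^ beta * g b.
  apply: le_trans jump _; rewrite -split_pow ler_wpM2r ?g_ge0 // ler_wpM2r ?powR_ge0 //.
  apply: ge0_ler_powR; rewrite ?nnegrE //; first by rewrite addr_ge0 // ltW.
have -> : a%:R `^ beta * (a%:R ^+ 2 * g b)
           = b%:R ^+ 2 * ((a%:R / b%:R) ^+ 2 * a%:R `^ beta * g b).
  by rewrite expr_div_n; field; rewrite gt_eqF.
exact: (ler_wpM2l (sqr_ge0 b%:R) ga).
Qed.

Lemma slow_jumping_sq_growth_bound :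
  slow_jumping g -> forall beta, 0 < beta ->
  exists N, forall a, (N <= a)%N -> sq_growth_bound a <= a%:R `^ beta.
Proof.
move=> jumping beta beta_gt0; have [N [N_gt0 hN]] := jumping beta beta_gt0.
exists N => a Na; apply: sq_growth_bound_le => [|b /andP[b_gt0 ba]].
  apply: (@le_trans _ _ (1 `^ beta)); first by rewrite powR1.
  apply: ge0_ler_powR; rewrite ?nnegrE //; first exact: ltW.
  by rewrite ler1n (leq_trans N_gt0).
by apply: slow_jumping_sq_ratio; rewrite ?b_gt0 ?hN.
Qed.

End SqGrowthBound.

Lemma truncnK_nat (R : realType) (k : nat) : Num.truncn (k%:R : R) = k.
Proof. by apply: truncn_def; rewrite lexx ltr_nat ltnSn. Qed.

Lemma sq_abs_int (R : realType) (z : int) : (z%:~R : R) ^+ 2 = (`|z|%N)%:R ^+ 2.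
Proof. by rewrite natr_absz intr_norm real_normK // num_real. Qed.

Theorem lemma17 (R : realType) (g : nat -> R) :
  in_G g -> slow_jumping g -> slow_dropping g ->
  exists h : R -> R, sub_polynomial h /\ (forall x : R, 0 <= x -> 0 < h x) /\
    forall (lambda : R), 0 < lambda ->
    forall (n m : nat) (D : stream n), in_D m D ->
    forall i : 'I_n,
      g `|freq D i|%N >= lambda * \sum_(j < n) g `|freq D j|%N ->
      ((freq D i)%:~R : R) ^+ 2 >=
        lambda / h (`|freq D i|%N)%:R *
        \sum_(j < n | (`|freq D j| < `|freq D i|)%N) ((freq D j)%:~R : R) ^+ 2.
Proof.
move=> [g0 [_ g_gt0]] jumping _.
have g_ge0 x : 0 <= g x by case: x => [|x]; rewrite ?g0 // ltW ?g_gt0.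
exists (fun x => sq_growth_bound g (Num.truncn x)); split; [|split].
- apply: sub_polynomial_between_1_powR => [x _|beta beta_gt0].
    exact: sq_growth_bound_ge1.
  have [N hN] := slow_jumping_sq_growth_bound g_ge0 g_gt0 jumping beta_gt0.
  near=> x.
  have x_ge0 : 0 <= x by near: x; apply: nbhs_pinfty_ge; rewrite num_real.
  have Nx : (N <= Num.truncn x)%N.
    by rewrite truncn_ge_nat //; near: x; apply: nbhs_pinfty_ge; rewrite num_real.
  apply: le_trans (hN _ Nx) _.
  by apply: ge0_ler_powR; rewrite ?nnegrE ?truncn_le //; exact: ltW.
- by move=> x _; apply: sq_growth_bound_gt0.
- move=> lambda lambda_gt0 n m D _ i heavy.
  rewrite truncnK_nat sq_abs_int.
  under eq_bigr => j _ do rewrite sq_abs_int.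
  exact: (heavy_sq_mass g_ge0 g_gt0 (v := fun j => `|freq D j|%N) lambda_gt0 heavy).
Unshelve. all: by end_near.
Qed.
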